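(* For every $\varepsilon>0$ there is a constant $C_\varepsilon$ (depending only on $\varepsilon$) such that for every $n$-state NFA $\mathcal{A}=(\Sigma,Q,I,F,\delta)$ and every symbol $a\in\Sigma$, $$\|\mathcal{A}\|\le C_\varepsilon\,|\Sigma|\,\bigl(c(\mathcal{G}(T^{(a)}))+n^2\bigr)\max_{b\in\Sigma\setminus\{a\}}2^{\operatorname{rank}(T^{(b)})^2/(4-\varepsilon)},$$ i.e., $\|\mathcal{A}\|\in O\!\left(|\Sigma|(c(\mathcal{G}(T^{(a)}))+n^2)\max_{b\in\Sigma\setminus\{a\}}2^{\operatorname{rank}(T^{(b)})^2/(4-\varepsilon)}\right)$.
   Context: An NFA is $\mathcal{A}=(\Sigma,Q,I,F,\delta)$ with finite alphabet $\Sigma$, state set $Q=\{q_1,\dots,q_n\}$, transitions $\delta\subseteq Q\times\Sigma\times Q$ ($\varepsilon$-free). Over the Boolean semifield $\mathbb{B}=(\{0,1\},\vee,\wedge,0,1)$, the transition matrix $T^{(w)}\in\mathbb{B}^{n\times n}$ has $T^{(w)}_{i,j}=1$ iff $(q_i,w,q_j)\in\delta$. The range $\mathcal{R}(T)=\{Tv:v\in\mathbb{B}^n\}$. For $\mathcal{J}\subseteq\Sigma$, $\mathcal{M}(\mathcal{J})$ is the monoid generated by $\{T^{(w)}:w\in\mathcal{J}\}$ under Boolean matrix multiplication (containing the identity). The subset complexity is $\|\mathcal{A}\|=\min_{\mathcal{J}\subseteq\Sigma}\bigl(1+\sum_{w\in\Sigma\setminus\mathcal{J}}|\mathcal{R}(T^{(w)})|\bigr)|\mathcal{M}(\mathcal{J})|$.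 $\operatorname{rank}(T)$ is the rank of the 0/1 matrix $T$ over the field $\mathbb{F}_2$. The precedence graph $\mathcal{G}(A)$ of an $n\times n$ Boolean matrix $A$ is the directed graph on vertices $\{1,\dots,n\}$ with an edge $i\to j$ iff $A_{i,j}=1$. The cyclicity of a strongly connected component is the greatest common divisor of the lengths of all its cycles, and the cyclicity $c(\mathcal{G})$ of a directed graph is the least common multiple of the cyclicities of its maximal strongly connected components that contain at least one cycle. *)

From Stdlib Require Import Reals.
From mathcomp Require Import all_boot all_order all_algebra.

Set Implicit Arguments.
Unset Strict Implicit.
Unset Printing Implicit Defensive.

Section NFA.
Variables (Sigma : finType) (n : nat).

Definition trans_mx (delta : {set 'I_n * Sigma * 'I_n}) (w : Sigma) : 'M[bool]_n :=
  \matrix_(i, j) ((i, w, j) \in delta).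

Definition bmul (A B : 'M[bool]_n) : 'M[bool]_n :=
  \matrix_(i, j) [exists k, A i k && B k j].
Definition bmulv (A : 'M[bool]_n) (v : 'cV[bool]_n) : 'cV[bool]_n :=
  \col_i [exists k, A i k && v k ord0].
Definition bid : 'M[bool]_n := \matrix_(i, j) (i == j).

Definition brange (A : 'M[bool]_n) : {set 'cV[bool]_n} :=
  [set bmulv A v | v : 'cV[bool]_n].

Definition gen_monoid (T : Sigma -> 'M[bool]_n) (J : {set Sigma}) : {set 'M[bool]_n} :=
  \bigcap_(S : {set 'M[bool]_n} |
            [&& bid \in S, [forall w in J, T w \in S]
              & [forall A in S, forall B in S, bmul A B \in S]]) S.

Definition sc_term (T : Sigma -> 'M[bool]_n) (J : {set Sigma}) : nat :=
  ((1 + \sum_(w in ~: J) #|brange (T w)|) * #|gen_monoid T J|)%N.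
Definition subset_complexity (T : Sigma -> 'M[bool]_n) : nat :=
  \big[minn/sc_term T set0]_(J : {set Sigma}) sc_term T J.

Definition rank2 (A : 'M[bool]_n) : nat :=
  \rank (map_mx (fun b : bool => ((nat_of_bool b)%:R)%R : 'F_2) A).
End NFA.

Section Graph.
Variable n : nat.
Definition prec_rel (A : 'M[bool]_n) : rel 'I_n := fun i j => A i j.

Definition scc (A : 'M[bool]_n) (i : 'I_n) : {set 'I_n} :=
  [set j | connect (prec_rel A) i j && connect (prec_rel A) j i].
Definition sccs (A : 'M[bool]_n) : {set {set 'I_n}} := [set scc A i | i : 'I_n].

Definition has_cycle_len (A : 'M[bool]_n) (C : {set 'I_n}) (k : nat) : bool :=
  [exists t : k.-tuple 'I_n,
     [&& 0 < k, cycle (prec_rel A) t, uniq t & all (fun v => v \in C) t]].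

(* Cyclicity of a component: gcd of the lengths of its cycles
   (simple cycles have length <= n). *)
Definition comp_cyclicity (A : 'M[bool]_n) (C : {set 'I_n}) : nat :=
  \big[gcdn/0]_(k < n.+1 | has_cycle_len A C k) k.
Definition comp_has_cycle (A : 'M[bool]_n) (C : {set 'I_n}) : bool :=
  [exists k : 'I_n.+1, has_cycle_len A C k].

Definition cyclicity (A : 'M[bool]_n) : nat :=
  \big[lcmn/1]_(C in sccs A | comp_has_cycle A C) comp_cyclicity A C.
End Graph.

(* Take J = {a}, so that ||A|| <= (1 + sum_(b != a) |R(T_b)|) |M({a})|.

   M({a}) consists of the Boolean powers of A = T_a, i.e. of the walk
   relations of its precedence graph. A walk splits along the strongly
   connected components it visits. Inside a component of size s and
   cyclicity d, the lengths of closed walks at a vertex form an additive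
   monoid of gcd d containing a cycle length <= 3 s, so by a Frobenius coin
   argument every length >= 10 s^2 in the right class modulo d is realised.
   Redistributing the length of a walk among its components shows that A^k
   only depends on k modulo c(G(A)) once k >= 11 n^2 + 2 n, whence
   |M({a})| <= 11 n^2 + 2 n + c(G(A)).

   For the ranges, factor T = C R over F_2 with R of rank r. The Boolean
   product T v only depends on the span of the columns of R selected by v,
   and a subspace of F_2^r is determined by its reduced echelon form: a
   pivot set P and |P| (r - |P|) <= r^2 / 4 free entries. Hence
   |R(T)| <= 2^r 2^(r^2/4) <= C_eps 2^(r^2/(4 - eps)). *)

From Stdlib Require Import Reals Lra Psatz ClassicalEpsilon.
From mathcomp Require Import all_boot all_order all_algebra zify.

Set Implicit Arguments.
Unset Strict Implicit.
Unset Printing Implicit Defensive.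

Section BooleanPowers.
Variables (n : nat) (A : 'M[bool]_n).
Local Notation e := (prec_rel A).

Definition bpow (k : nat) : 'M[bool]_n := iter k (fun B => bmul B A) (bid n).

Lemma bpowP k u v :
  reflect (exists p, [/\ size p = k, path e u p & last u p = v]) (bpow k u v).
Proof.
elim: k v => [|k IH] v /=.
  rewrite /bid mxE; apply: (iffP eqP) => [->|[p [/size0nil -> _ /= ->]]] //.
  by exists [::].
rewrite /bmul mxE; apply: (iffP existsP) => [[m /andP[/IH [p [sp pp lp]] Amv]]|].
  exists (rcons p v); rewrite size_rcons sp last_rcons rcons_path pp lp.
  by split.
case=> p []; case/lastP: p => [//|p w]; rewrite size_rcons last_rcons rcons_path.
move=> [sp] /andP[pp ew] wv; subst w; exists (last u p); apply/andP; split => //.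
by apply/IH; exists p.
Qed.

Lemma bpow0 x : bpow 0 x x.
Proof. by rewrite /= /bid mxE eqxx. Qed.

Lemma bpow1 : bpow 1 = A.
Proof.
apply/matrixP => u v; rewrite /= /bmul /bid mxE; apply/existsP/idP.
  by case=> w; rewrite mxE => /andP[/eqP-> ->].
by move=> h; exists u; rewrite mxE eqxx h.
Qed.

Lemma bpow_trans k1 k2 u w v : bpow k1 u w -> bpow k2 w v -> bpow (k1 + k2) u v.
Proof.
move=> /bpowP[p [sp pp lp]] /bpowP[q [sq pq lq]]; apply/bpowP.
exists (p ++ q); rewrite size_cat sp sq cat_path last_cat pp lp pq lq.
by [].
Qed.

Lemma bpowD_split k1 k2 u v :
  bpow (k1 + k2) u v -> exists2 w, bpow k1 u w & bpow k2 w v.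
Proof.
move=> /bpowP[p [sp pp lp]]; exists (last u (take k1 p)); apply/bpowP.
  have hk1 : k1 <= size p by rewrite sp leq_addr.
  exists (take k1 p); rewrite size_takel //; split => //.
  by rewrite -(cat_take_drop k1 p) cat_path in pp; case/andP: pp.
exists (drop k1 p); rewrite size_drop sp addKn; split => //.
  by rewrite -(cat_take_drop k1 p) cat_path in pp; case/andP: pp.
by rewrite -last_cat cat_take_drop.
Qed.

Lemma bpowD k1 k2 : bpow (k1 + k2) = bmul (bpow k1) (bpow k2).
Proof.
apply/matrixP => u v; rewrite /bmul mxE; apply/idP/existsP.
  by move/bpowD_split => [w h1 h2]; exists w; rewrite h1 h2.
by case=> w /andP[h1 h2]; apply: bpow_trans h1 h2.
Qed.

End BooleanPowers.

Lemma uniq_size_le_card (T : finType) (s : seq T) (S : {set T}) :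
  uniq s -> {subset s <= S} -> size s <= #|S|.
Proof.
move=> us sS; rewrite -(card_uniqP us); apply: subset_leq_card.
by apply/subsetP.
Qed.

Section StrongConnectivity.
Variables (n : nat) (A : 'M[bool]_n).
Local Notation e := (prec_rel A).

Definition sconn (x y : 'I_n) : bool := connect e x y && connect e y x.

Lemma mem_scc x y : (y \in scc A x) = sconn x y.
Proof. by rewrite inE. Qed.

Lemma sconn_refl x : sconn x x.
Proof. by rewrite /sconn connect0. Qed.

Lemma sconn_sym x y : sconn x y -> sconn y x.
Proof. by rewrite /sconn andbC. Qed.

Lemma sconn_trans x y z : sconn x y -> sconn y z -> sconn x z.
Proof.
case/andP=> h1 h2 /andP[h3 h4]; apply/andP; split; apply: connect_trans; eauto.
Qed.

Lemma scc_card_gt0 x : 0 < #|scc A x|.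
Proof. by rewrite card_gt0; apply/set0Pn; exists x; rewrite mem_scc sconn_refl. Qed.

Lemma scc_sconn x y : sconn x y -> scc A x = scc A y.
Proof.
move=> h; apply/setP => z; rewrite !mem_scc; apply/idP/idP => h2.
  exact: sconn_trans (sconn_sym h) h2.
exact: sconn_trans h h2.
Qed.

Lemma path_connect_last x p w :
  path e x p -> w \in x :: p -> connect e w (last x p).
Proof.
move=> pp; rewrite inE => /orP[/eqP->|wp].
  by apply: (path_connect pp); rewrite mem_last.
case/splitPr: wp pp => p1 p2; rewrite cat_path last_cat /= => /andP[_ /andP[_ pp2]].
by apply/connectP; exists p2.
Qed.

Lemma path_sconn x p w :
  path e x p -> connect e (last x p) x -> w \in x :: p -> sconn x w.
Proof.
move=> pp cl wp; apply/andP; split; first exact: (path_connect pp).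
by apply: connect_trans cl; apply: path_connect_last.
Qed.

Lemma closed_path_sub_scc x p :
  path e x p -> last x p = x -> {subset x :: p <= scc A x}.
Proof.
by move=> pp lp w wp; rewrite mem_scc; apply: path_sconn pp _ wp; rewrite lp connect0.
Qed.

Lemma sconn_short_walk u v :
  sconn u v -> exists2 k, k < #|scc A u| & bpow A k u v.
Proof.
move=> /andP[/connectP[q pq ->] cvu].
case: (shortenP pq) => q' pq' uq' sub.
exists (size q'); last by apply/bpowP; exists q'; split.
apply: (@uniq_size_le_card _ (u :: q')) => // w; rewrite mem_scc inE.
case/orP=> [/eqP->|/sub wq]; first exact: sconn_refl.
exact: path_sconn pq cvu (mem_behead _).
Qed.

End StrongConnectivity.

Lemma not_uniq_split (T : eqType) (p : seq T) :
  ~~ uniq p -> exists p1 v p2 p3, p = p1 ++ v :: (p2 ++ v :: p3).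
Proof.
elim: p => [//|x s IH] /=; rewrite negb_and negbK => /orP[xs|/IH].
  by case/splitPr: xs => s1 s2; exists [::], x, s1, s2.
by case=> p1 [v [p2 [p3 ->]]]; exists (x :: p1), v, p2, p3.
Qed.

Section ClosedWalks.
Variables (n : nat) (A : 'M[bool]_n).
Local Notation e := (prec_rel A).

Lemma closed_path_cut z p1 v p2 p3 :
  path e z (p1 ++ v :: p2 ++ v :: p3) -> last z (p1 ++ v :: p2 ++ v :: p3) = z ->
  [/\ path e z (p1 ++ v :: p3), last z (p1 ++ v :: p3) = z,
      path e v (p2 ++ [:: v])
    & {subset (z :: p1 ++ v :: p3) ++ p2 <= z :: p1 ++ v :: p2 ++ v :: p3}].
Proof.
rewrite ?(cat_path, last_cat) /= ?(cat_path, last_cat) /= => /and3P[p1P zv].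
case/and3P=> -> -> -> ->; rewrite p1P zv; split=> // w; rewrite !(inE, mem_cat).
by case: (w == z); case: (w \in p1); case: (w == v); case: (w \in p2);
  case: (w \in p3).
Qed.

(* A closed walk splits at a repeated vertex into two shorter closed walks;
   without repetition it is a simple cycle. *)
Lemma closed_walk_len_dvd (S : {set 'I_n}) d :
  (forall k, has_cycle_len A S k -> d %| k) ->
  forall z p, path e z p -> last z p = z -> {subset z :: p <= S} -> d %| size p.
Proof.
move=> dvd_cycles z p; elim: {p}(size p) {-2}p (leqnn (size p)) z => [|L IH] p.
  by rewrite leqn0 => /eqP-> z.
move=> pL z pp lp pS; have [up|/not_uniq_split[p1 [v [p2 [p3 def]]]]] := boolP (uniq p).
  case: p pL pp lp pS up => [//|y p'] _ pp lp pS up.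
  apply: dvd_cycles; apply/existsP; exists (in_tuple (y :: p')); apply/and4P.
  split=> //; first by move: pp lp => /= /andP[ezy pp'] lp; rewrite rcons_path pp' lp.
  by apply/allP => w wp; apply: pS; rewrite inE wp orbT.
subst p; have [pp' lp' pv sub] := closed_path_cut pp lp.
have /IH h1 : size (p1 ++ v :: p3) <= L.
  by move: pL; rewrite !size_cat /= size_cat /=; lia.
have /IH h2 : size (p2 ++ [:: v]) <= L.
  by move: pL; rewrite !size_cat /= size_cat /=; lia.
have sub1 : {subset z :: p1 ++ v :: p3 <= S}.
  by move=> w wp; apply/pS/sub; rewrite mem_cat wp.
have sub2 : {subset v :: p2 ++ [:: v] <= S}.
  have vS : v \in S by apply: pS; rewrite !(inE, mem_cat) eqxx !orbT.
  move=> w; rewrite !(inE, mem_cat) => /or3P[/eqP->|wp2|/eqP->] //.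
  by apply/pS/sub; rewrite mem_cat wp2 orbT.
move: (h1 z pp' lp' sub1) (h2 v pv (last_cat _ _ _) sub2).
rewrite !size_cat /= size_cat /= addn1 => d1 d2.
have -> : size p1 + (size p2 + (size p3).+1).+1 = size p1 + (size p3).+1 + (size p2).+1.
  by lia.
exact: dvdn_add.
Qed.

End ClosedWalks.

Section Cyclicity.
Variables (n : nat) (A : 'M[bool]_n).

Lemma has_cycle_len_card S k : has_cycle_len A S k -> 0 < k <= #|S|.
Proof.
case/existsP=> t /and4P[k0 _ ut /allP aS]; rewrite k0 /=.
by rewrite -(size_tuple t); apply: uniq_size_le_card => // w /aS.
Qed.

Lemma has_cycle_len_ltn S k : has_cycle_len A S k -> k < n.+1.
Proof.
move/has_cycle_len_card=> /andP[_ h]; rewrite ltnS; apply: leq_trans h _.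
by rewrite -[X in _ <= X](card_ord n) max_card.
Qed.

Lemma cycle_closed_walk S k :
  has_cycle_len A S k -> exists2 w, w \in S & bpow A k w w.
Proof.
case/existsP=> t /and4P[k0 ct ut /allP aS].
case: t ct ut aS => [[|w t'] st] //=; first by move: k0; rewrite -(eqP st).
move=> ct _ aS; exists w; first by apply: aS; rewrite inE eqxx.
apply/bpowP; exists (rcons t' w); rewrite size_rcons last_rcons.
by split => //; apply/eqP.
Qed.

Lemma comp_cyclicity_dvd S k : has_cycle_len A S k -> comp_cyclicity A S %| k.
Proof.
move=> h; rewrite /comp_cyclicity (bigD1 (Ordinal (has_cycle_len_ltn h))) //=.
exact: dvdn_gcdl.
Qed.

Lemma dvdn_comp_cyclicity S d :
  (forall k, has_cycle_len A S k -> d %| k) -> d %| comp_cyclicity A S.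
Proof.
move=> H; rewrite /comp_cyclicity; apply: (big_ind (fun x => d %| x)) => //.
  by move=> x y hx hy; rewrite dvdn_gcd hx hy.
by move=> i; apply: H.
Qed.

Lemma comp_cyclicity_gt0 S k : has_cycle_len A S k -> 0 < comp_cyclicity A S.
Proof.
move=> h; have /andP[k0 _] := has_cycle_len_card h.
have := comp_cyclicity_dvd h; apply: contraLR.
by rewrite -leqNgt leqn0 => /eqP->; rewrite dvd0n -lt0n.
Qed.

Lemma comp_cyclicity_le_card S k : has_cycle_len A S k -> comp_cyclicity A S <= #|S|.
Proof.
move=> h; case/andP: (has_cycle_len_card h) => k0 kS.
exact: leq_trans (dvdn_leq k0 (comp_cyclicity_dvd h)) kS.
Qed.

Lemma comp_cyclicity_dvd_cyclicity x k :
  has_cycle_len A (scc A x) k -> comp_cyclicity A (scc A x) %| cyclicity A.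
Proof.
move=> h; rewrite /cyclicity (bigD1 (scc A x)) /=; first exact: dvdn_lcml.
apply/andP; split; first by apply/imsetP; exists x.
by apply/existsP; exists (Ordinal (has_cycle_len_ltn h)).
Qed.

Lemma cyclicity_gt0 : 0 < cyclicity A.
Proof.
rewrite /cyclicity; apply: (big_ind (fun x => 0 < x)) => //.
  by move=> x y hx hy; rewrite lcmn_gt0 hx hy.
by move=> C /andP[_ /existsP[k hk]]; apply: comp_cyclicity_gt0 hk.
Qed.

(* Without cycles in the component, [closed_walk_len_dvd] would make [L.+1]
   divide [L]. *)
Lemma closed_walk_has_cycle x L :
  0 < L -> bpow A L x x -> exists k, has_cycle_len A (scc A x) k.
Proof.
move=> L0 /bpowP[p [sp pp lp]].
have [/existsP[k hk]|/existsPn hn] := boolP [exists k : 'I_n.+1, has_cycle_len A (scc A x) k].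
  by exists k.
have : L.+1 %| size p.
  apply: (closed_walk_len_dvd (S := scc A x)) pp lp (closed_path_sub_scc pp lp) => k hk.
  by move: (hn (Ordinal (has_cycle_len_ltn hk))); rewrite hk.
by rewrite sp => /dvdn_leq; rewrite L0 ltnn => /(_ isT).
Qed.

Lemma comp_cyclicity_dvd_closed_walk x L :
  bpow A L x x -> comp_cyclicity A (scc A x) %| L.
Proof.
move=> /bpowP[p [sp pp lp]]; rewrite -sp.
apply: (closed_walk_len_dvd (S := scc A x)) pp lp (closed_path_sub_scc pp lp).
exact: comp_cyclicity_dvd.
Qed.

End Cyclicity.

Section Frobenius.
Variables (Q : pred nat) (a M : nat).
Hypotheses (Q0 : Q 0) (QD : forall x y, Q x -> Q y -> Q (x + y)).
Hypotheses (a_gt0 : 0 < a) (Qa : Q a).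

Let h : nat := \big[gcdn/0]_(g < M.+1 | Q g) g.
Let resid (m : nat) : 'I_a := Ordinal (ltn_pmod m a_gt0).

Lemma resid_eq m m' : m %% a = m' %% a -> resid m = resid m'.
Proof. by move=> H; apply: val_inj. Qed.

Let shift_closed (X : {set 'I_a}) (v : nat) : Prop := forall m, resid m \in X -> resid (m + v) \in X.

Lemma shift_closedD X u v : shift_closed X u -> shift_closed X v -> shift_closed X (u + v).
Proof. by move=> hu hv m /hu /hv; rewrite addnA. Qed.

Lemma shift_closedM X v k : shift_closed X v -> shift_closed X (k * v).
Proof.
move=> hv; elim: k => [|k IH] m; first by rewrite addn0.
by rewrite mulSn; apply: shift_closedD.
Qed.

(* Bezout modulo [a]: [gcdn u v = b u + (a - 1) c v %[mod a]] for some [b], [c]. *)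
Lemma shift_closed_gcd X u v :
  shift_closed X u -> shift_closed X v -> shift_closed X (gcdn u v).
Proof.
move=> hu hv; have [->|u0] := posnP u; first by rewrite gcd0n.
case: (Bezoutl v u0) => c _ /dvdnP[b hb] m hm.
have -> : resid (m + gcdn u v) = resid (m + (b * u + (a.-1 * c) * v)).
  apply: resid_eq; rewrite -mulnA.
  have -> : b * u + a.-1 * (c * v) = gcdn u v + a * (c * v).
    by rewrite -hb; case: a a_gt0 => // a' _ /=; rewrite mulSn; lia.
  by rewrite addnA -[RHS]modnDmr modnMr addn0.
by apply: shift_closedD hm; apply: shift_closedM.
Qed.

Lemma shift_closed_multiples (X : {set 'I_a}) :
  resid 0 \in X -> (forall g, g <= M -> Q g -> shift_closed X g) ->
  forall m, h %| m -> resid m \in X.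
Proof.
move=> X0 cX; have ch : shift_closed X h.
  apply: (big_ind (shift_closed X)) => [m|x y|[g gM] /= Qg]; first by rewrite addn0.
    exact: shift_closed_gcd.
  exact: cX.
by move=> m /dvdnP[k ->]; have := shift_closedM k ch X0; rewrite add0n.
Qed.

Definition resid_upto t : {set 'I_a} :=
  [set r : 'I_a | [exists x : 'I_t.+1, Q x && (resid x == r)]].

Lemma resid_upto_mono t t' : t <= t' -> resid_upto t \subset resid_upto t'.
Proof.
move=> tt; apply/subsetP => r; rewrite !inE => /existsP[x /andP[Qx xr]].
apply/existsP; exists (widen_ord (n := t.+1) (m := t'.+1) ltac:(by rewrite ltnS) x).
by rewrite Qx.
Qed.

Lemma mem_resid_upto t m x : x <= t -> Q x -> x %% a = m %% a -> resid m \in resid_upto t.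
Proof.
move=> xt Qx xm; rewrite inE; apply/existsP.
exists (@Ordinal t.+1 x ltac:(by rewrite ltnS)).
by rewrite Qx (resid_eq xm) eqxx.
Qed.

Lemma resid_uptoP t m :
  resid m \in resid_upto t -> exists2 x, x <= t & Q x && (x %% a == m %% a).
Proof.
rewrite inE => /existsP[[x xt] /andP[Qx /eqP xr]]; exists x; first by rewrite -ltnS.
by rewrite Qx; move: xr => /(congr1 val) /= ->.
Qed.

Lemma resid_upto0 t : resid 0 \in resid_upto t.
Proof. exact: (mem_resid_upto (x := 0)). Qed.

Lemma resid_upto_stable_closed t g :
  resid_upto t = resid_upto (t + M) -> g <= M -> Q g -> shift_closed (resid_upto t) g.
Proof.
move=> eq gM Qg m /resid_uptoP[x xt /andP[Qx /eqP xm]]; rewrite eq.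
apply: (mem_resid_upto (x := x + g)); first by rewrite leq_add.
  exact: QD.
by rewrite -modnDml xm modnDml.
Qed.

(* Once [resid_upto t = resid_upto (t + M)] the set is closed under the
   generators, hence contains every multiple of [h]; until then it grows. *)
Lemma resid_upto_grow j :
  j < #|resid_upto (j * M)| \/ forall m, h %| m -> resid m \in resid_upto (j * M).
Proof.
have mono i : resid_upto (i * M) \subset resid_upto (i.+1 * M).
  by apply: resid_upto_mono; rewrite leq_mul2r leqnSn orbT.
elim: j => [|j [IH|IH]].
- by left; rewrite card_gt0; apply/set0Pn; exists (resid 0); apply: resid_upto0.
- have [eq|neq] := eqVneq (resid_upto (j * M)) (resid_upto (j.+1 * M)).
    right; rewrite -eq; apply: shift_closed_multiples; first exact: resid_upto0.
    by move=> g; apply: resid_upto_stable_closed; rewrite eq mulSn addnC.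
  by left; apply: leq_ltn_trans IH (proper_card _); rewrite properEneq neq mono.
- by right => m hm; apply: (subsetP (mono j)); apply: IH.
Qed.

Lemma Q_multiple k : Q (k * a).
Proof. by elim: k => [|k IH]; rewrite ?mul0n // mulSn; apply: QD. Qed.

Lemma frobenius m : h %| m -> a * M <= m -> Q m.
Proof.
move=> hm am.
have full : forall m, h %| m -> resid m \in resid_upto (a * M).
  case: (resid_upto_grow a) => // H; exfalso.
  by move: (max_card (mem (resid_upto (a * M)))); rewrite card_ord leqNgt H.
case/resid_uptoP: (full m hm) => x xt /andP[Qx /eqP xm].
have xm' : x <= m by apply: leq_trans am.
have -> : m = x + (m - x) %/ a * a.
  rewrite divnK ?subnKC //.
  have H : x + 0 == x + (m - x) %[mod a] by rewrite addn0 subnKC // xm.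
  by move: H; rewrite /dvdn eqn_modDl mod0n eq_sym.
by apply: QD => //; apply: Q_multiple.
Qed.

End Frobenius.

Lemma big_gcdn_dvd (Q : pred nat) M g :
  g <= M -> Q g -> \big[gcdn/0]_(i < M.+1 | Q i) i %| g.
Proof.
move=> gM Qg; rewrite (bigD1 (@Ordinal M.+1 g ltac:(by rewrite ltnS))) //=.
exact: dvdn_gcdl.
Qed.

Section WalksInComponent.
Variables (n : nat) (A : 'M[bool]_n) (x : 'I_n).
Local Notation s := #|scc A x|.

Lemma closed_walk_through_cycle k : has_cycle_len A (scc A x) k ->
  exists p q, [/\ p < s, q < s, bpow A (p + q) x x & bpow A (p + k + q) x x].
Proof.
case/cycle_closed_walk=> w; rewrite mem_scc => sxw bw.
have [p ps bp] := sconn_short_walk sxw; have [q qs bq] := sconn_short_walk (sconn_sym sxw).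
rewrite -(scc_sconn sxw) in qs; exists p, q; split => //; first exact: bpow_trans bp bq.
by apply: bpow_trans bq; apply: bpow_trans bp bw.
Qed.

Lemma gcd_short_closed_walks_dvd :
  \big[gcdn/0]_(g < (3 * s).+1 | bpow A g x x) g %| comp_cyclicity A (scc A x).
Proof.
apply: dvdn_comp_cyclicity => k hk.
have [p [q [ps qs Q1 Q2]]] := closed_walk_through_cycle hk.
have /andP[_ ks] := has_cycle_len_card hk.
have gcd_dvd := big_gcdn_dvd (Q := fun g => bpow A g x x) (M := 3 * s).
have := gcd_dvd _ (_ : p + k + q <= 3 * s) Q2; rewrite addnAC dvdn_addr //; first by lia.
by apply: gcd_dvd Q1; lia.
Qed.

(* Closed walks at [x] have lengths in an additive monoid containing a cycle
   length [<= 3 s] and with the same gcd as the cycle lengths, so Frobenius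
   fills every residue class modulo the component cyclicity above [9 s^2]. *)
Lemma sconn_walk_flex y l L :
  sconn A x y -> 0 < l -> bpow A l x y -> 10 * s * s <= L ->
  L = l %[mod comp_cyclicity A (scc A x)] -> bpow A L x y.
Proof.
move=> sxy l0 bl BL mL; set d := comp_cyclicity A (scc A x).
have [back _ bback] := sconn_short_walk (sconn_sym sxy).
have [rho rhos brho] := sconn_short_walk sxy.
have [k hk] : exists k, has_cycle_len A (scc A x) k.
  apply: (closed_walk_has_cycle (L := l + back)); first by rewrite addn_gt0 l0.
  exact: bpow_trans bl bback.
have mr : L = rho %[mod d].
  rewrite mL; apply/eqP; rewrite -(eqn_modDr back).
  have /dvdnP[u ->] := comp_cyclicity_dvd_closed_walk (bpow_trans bl bback).
  have /dvdnP[v ->] := comp_cyclicity_dvd_closed_walk (bpow_trans brho bback).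
  by rewrite !modnMl.
have rL : rho <= L.
  by apply: leq_trans BL; move: rhos; move: (rho) (#|scc A x|) => r t; clear; nia.
have [p [q [ps qs _ Qa]]] := closed_walk_through_cycle hk.
have /andP[k0 ks] := has_cycle_len_card hk.
have : bpow A (L - rho) x x.
  apply: (frobenius (Q := fun g => bpow A g x x) (a := p + k + q) (M := 3 * s)).
  - exact: bpow0.
  - by move=> u v; apply: bpow_trans.
  - by rewrite !addn_gt0 k0 orbT.
  - exact: Qa.
  - apply: dvdn_trans gcd_short_closed_walks_dvd _.
    by rewrite -eqn_mod_dvd // mr.
  - have pkq : p + k + q <= 3 * s by lia.
    rewrite leq_subRL //; apply: leq_trans BL.
    by move: pkq rhos; move: (p + k + q) (rho) (#|scc A x|) => u r t; clear; nia.
by move=> /bpow_trans /(_ brho); rewrite subnK.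
Qed.

End WalksInComponent.

Section ComponentChains.
Variables (n : nat) (A : 'M[bool]_n).
Local Notation e := (prec_rel A).

Inductive comp_chain : 'I_n -> 'I_n -> seq ('I_n * 'I_n) -> Prop :=
| comp_chain1 x y : sconn A x y -> comp_chain x y [:: (x, y)]
| comp_chainS x y x' j ps : sconn A x y -> A y x' -> ~~ sconn A y x' ->
    comp_chain x' j ps -> comp_chain x j ((x, y) :: ps).

Lemma comp_chain_size_gt0 i j ps : comp_chain i j ps -> 0 < size ps.
Proof. by case. Qed.

Lemma comp_chain_nth_sconn i j ps d0 k : comp_chain i j ps -> k < size ps ->
  sconn A (nth d0 ps k).1 (nth d0 ps k).2.
Proof.
move=> ch /(mem_nth d0); move: (nth d0 ps k) => pr.
elim: ch => [x y h|x y x' j' ps' h _ _ _ IH]; rewrite inE; first by move/eqP->.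
by case/orP=> [/eqP->|/IH].
Qed.

Lemma comp_chain_walk i j ps (f : nat -> nat) : comp_chain i j ps ->
  (forall k, k < size ps -> bpow A (f k) (nth (i, i) ps k).1 (nth (i, i) ps k).2) ->
  bpow A (\sum_(k < size ps) f k + (size ps).-1) i j.
Proof.
move=> ch; elim: ch f => [x y h|x y x' j' ps' h Ayx _ ch IH] f H.
  by rewrite big_ord1 addn0; apply: (H 0).
have /IH walk_tail : forall k, k < size ps' ->
    bpow A (f k.+1) (nth (x', x') ps' k).1 (nth (x', x') ps' k).2.
  by move=> k ks; rewrite (set_nth_default (x, x)) //; apply: (H k.+1).
have b0 : bpow A (f 0 + 1) x x' by apply: bpow_trans (H 0 isT) _; rewrite bpow1.
have := bpow_trans b0 walk_tail; rewrite /= big_ord_recl /=.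
have := comp_chain_size_gt0 ch; case: (size ps') => // m _ /=.
have -> : \sum_(k < m.+1) f (bump 0 k) = \sum_(k < m.+1) f k.+1 by [].
move: (\sum_(k < m.+1) f k.+1) (f 0) => t f0.
by rewrite addn1 addSn -addnA !addnS.
Qed.

Lemma comp_chain_cons_sconn i y j ps : sconn A i y -> comp_chain y j ps ->
  exists y1 rest, ps = (y, y1) :: rest /\ comp_chain i j ((i, y1) :: rest).
Proof.
move=> siy ch; inversion ch; subst.
  by exists j, [::]; split => //; apply: comp_chain1; apply: sconn_trans siy H.
exists y0, ps0; split => //; apply: (comp_chainS (x' := x')) => //.
exact: sconn_trans siy H.
Qed.

Lemma walk_comp_chain i p : path e i p -> exists ps ls,
  [/\ comp_chain i (last i p) ps, size ls = size ps,
      forall k, k < size ps ->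
        bpow A (nth 0 ls k) (nth (i, i) ps k).1 (nth (i, i) ps k).2
    & sumn ls + (size ps).-1 = size p].
Proof.
elim: p i => [|y p IH] i /=.
  move=> _; exists [:: (i, i)], [:: 0]; split => //; first exact/comp_chain1/sconn_refl.
  by case=> // _; apply: bpow0.
case/andP=> eiy /IH [ps [ls [ch sz H sm]]].
have [siy|nsiy] := boolP (sconn A i y).
  have [y1 [rest [defps ch']]] := comp_chain_cons_sconn siy ch.
  subst ps; case: ls sz H sm => [//|l ls] /= [sz] H sm.
  exists ((i, y1) :: rest), (l.+1 :: ls); split => //=; first by rewrite sz.
    case=> [_|k ks]; last by rewrite /= (set_nth_default (y, y)) //; apply: (H k.+1).
    have b1 : bpow A 1 i y by rewrite bpow1.
    exact: bpow_trans b1 (H 0 isT).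
  by rewrite -sm addSn.
exists ((i, i) :: ps), (0 :: ls); split => //=.
- by apply: (comp_chainS (x' := y)) => //; apply: sconn_refl.
- by rewrite sz.
- case=> [_|k ks] /=; first exact: bpow0.
  by rewrite (set_nth_default (y, y)) //; apply: H.
- rewrite add0n -sm; have := comp_chain_size_gt0 ch.
  by case: (size ps) => //= m _; rewrite addnS.
Qed.

(* The components along a chain are pairwise disjoint and all reachable from [i]. *)
Lemma comp_chain_card_sum i j ps : comp_chain i j ps ->
  sumn [seq #|scc A pr.1| | pr <- ps] <= #|[set z | connect e i z]|.
Proof.
elim=> [x y h|x y x' j' ps' h Ayx nsc ch IH] /=.
  rewrite addn0; apply: subset_leq_card; apply/subsetP => z.
  by rewrite mem_scc inE => /andP[].
apply: leq_trans (leq_add (leqnn _) IH) _.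
have dis : scc A x :&: [set z | connect e x' z] = set0.
  apply/setP => z; rewrite !inE andbC; apply/negbTE/negP => /andP[cx'z /andP[cxz czx]].
  case/negP: nsc; apply/andP; split; first by apply: connect1.
  by apply: connect_trans (connect_trans cx'z czx) _; case/andP: h.
rewrite -cardsUI dis cards0 addn0; apply: subset_leq_card; apply/subsetP => z.
rewrite !inE => /orP[/andP[]//|cx'z].
apply: connect_trans cx'z; apply: connect_trans (connect1 Ayx).
by case/andP: h.
Qed.

End ComponentChains.

Lemma long_walk_flex n (A : 'M[bool]_n) x y l :
  sconn A x y -> bpow A l x y -> 10 * #|scc A x| * #|scc A x| <= l ->
  let d := comp_cyclicity A (scc A x) in
  [/\ 0 < d, d <= #|scc A x|, d %| cyclicity A &
      forall L, 10 * #|scc A x| * #|scc A x| <= L -> L = l %[mod d] -> bpow A L x y].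
Proof.
move=> sxy bl Bl d.
have l_gt0 : 0 < l by apply: leq_trans Bl; rewrite !muln_gt0 scc_card_gt0.
have [back _ bback] := sconn_short_walk (sconn_sym sxy).
have [k hk] : exists k, has_cycle_len A (scc A x) k.
  by apply: closed_walk_has_cycle (bpow_trans bl bback); rewrite addn_gt0 l_gt0.
split; [exact: comp_cyclicity_gt0 hk | exact: comp_cyclicity_le_card hk |
        exact: comp_cyclicity_dvd_cyclicity hk |].
by move=> L; apply: sconn_walk_flex.
Qed.

Definition nat_span (m : nat) (d : nat -> nat) (t : nat) : bool :=
  if excluded_middle_informative (exists g : nat -> nat, t = \sum_(k < m) g k * d k)
  then true else false.

Lemma nat_spanP m (d : nat -> nat) t :
  reflect (exists g : nat -> nat, t = \sum_(k < m) g k * d k) (nat_span m d t).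
Proof. by rewrite /nat_span; case: excluded_middle_informative => h; constructor. Qed.

Lemma nat_span0 m d : nat_span m d 0.
Proof. by apply/nat_spanP; exists (fun _ => 0); rewrite big1. Qed.

Lemma nat_spanD m d x y : nat_span m d x -> nat_span m d y -> nat_span m d (x + y).
Proof.
move=> /nat_spanP[g1 ->] /nat_spanP[g2 ->]; apply/nat_spanP; exists (fun k => g1 k + g2 k).
by rewrite -big_split /=; apply: eq_bigr => k _; rewrite mulnDl.
Qed.

Lemma nat_span_gen m d k : k < m -> nat_span m d (d k).
Proof.
move=> km; apply/nat_spanP; exists (fun i => i == k : nat).
rewrite (bigD1 (Ordinal km)) //= eqxx mul1n big1 ?addn0 // => i /eqP ik.
by case: eqP => [ik'|]; rewrite ?mul0n //; case: ik; apply: val_inj.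
Qed.

(* A walk through [m] components: segment [k] has length [l k] inside a
   component of size [s k] and cyclicity [d k] dividing [c], and [P k L]
   means that segment [k] can also be traversed in [L] steps. *)
Section Redistribution.
Variables (m n c : nat) (P : nat -> nat -> Prop) (l s d : nat -> nat).
Hypotheses (m_gt0 : 0 < m) (Pl : forall k, k < m -> P k (l k)).
Hypotheses (s_gt0 : forall k, k < m -> 0 < s k) (sum_s : \sum_(k < m) s k <= n).
Let B (k : nat) : nat := 10 * s k * s k.
Hypothesis flex : forall k, k < m -> B k <= l k ->
  [/\ 0 < d k, d k <= s k, d k %| c &
      forall L, B k <= L -> L = l k %[mod d k] -> P k L].

Lemma s_le_n k : k < m -> s k <= n.
Proof. by move=> km; apply: leq_trans sum_s; rewrite (bigD1 (Ordinal km)) //= leq_addr. Qed.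

Lemma m_le_n : m <= n.
Proof.
apply: leq_trans sum_s; rewrite -[X in X <= _](card_ord m) -sum1_card.
by apply: leq_sum => k _; apply: s_gt0.
Qed.

Lemma sum_B_s : \sum_(k < m) (B k + s k) <= (10 * n + 1) * n.
Proof.
apply: leq_trans (leq_mul (leqnn _) sum_s); rewrite big_distrr /=.
apply: leq_sum => k _; have := s_le_n (ltn_ord k); rewrite /B.
by move: (s k) => x; clear; nia.
Qed.

(* Long segments are shortened by whole periods to length [< B k + d k]. *)
Let long (k : nat) : bool := B k <= l k.
Let d' (k : nat) : nat := if long k then d k else 0.
Let shrink (k : nat) : nat := if long k then (l k - B k) %/ d k else 0.
Let l0 (k : nat) : nat := l k - shrink k * d' k.

Lemma l_split k : l k = l0 k + shrink k * d' k.
Proof.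
rewrite /l0 subnK // /shrink /d' /long; case: ifP => // Bl.
by apply: leq_trans (leq_divM _ _) (leq_subr _ _).
Qed.

Lemma l0_le k : k < m -> l0 k <= B k + s k.
Proof.
move=> km; rewrite /l0 /shrink /d' /long; case: ifPn => [Bl|]; last first.
  by rewrite -ltnNge muln0 subn0 => /ltnW /leq_trans; apply; rewrite leq_addr.
have [d0 ds _ _] := flex km Bl; apply: leq_trans (_ : _ <= B k + d k) _; last first.
  by rewrite leq_add2l.
have := divn_eq (l k - B k) (d k); have := ltn_pmod (l k - B k) d0; move: Bl.
by move: (l k) (B k) (d k) ((l k - B k) %/ d k) ((l k - B k) %% d k); clear; lia.
Qed.

Lemma P_l0_shift k g : k < m -> P k (l0 k + g * d' k).
Proof.
move=> km; rewrite /l0 /shrink /d' /long; case: ifPn => [Bl|nBl]; last first.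
  by rewrite !muln0 subn0 addn0; apply: Pl.
have [_ _ _ fl] := flex km Bl; apply: fl.
  apply: leq_trans (leq_addr _ _); have := leq_divM (l k - B k) (d k); move: Bl.
  by move: (l k) (B k) ((l k - B k) %/ d k * d k); clear; lia.
have le : (l k - B k) %/ d k * d k <= l k := leq_trans (leq_divM _ _) (leq_subr _ _).
by rewrite -modnDmr modnMl addn0 -[in RHS](subnK le) addnC modnMDl.
Qed.

Lemma long_exists : 11 * n * n + 2 * n <= \sum_(k < m) l k + m.-1 ->
  exists2 k0, k0 < m & long k0.
Proof.
move=> NT1; have [/existsP[k lk]|/existsPn short] := boolP [exists k : 'I_m, long k].
  by exists k.
have : \sum_(k < m) l k <= \sum_(k < m) (B k + s k).
  apply: leq_sum => k _; apply: leq_trans (leq_addr _ _).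
  by move: (short k); rewrite /long -ltnNge; apply: ltnW.
have := sum_B_s; have := m_le_n; move: NT1 m_gt0.
by move: (\sum_(k < m) l k) (\sum_(k < m) (B k + s k)) m; clear; lia.
Qed.

Lemma sum_l0_le : \sum_(k < m) l0 k + m.-1 <= 10 * n * n + 2 * n - 1.
Proof.
have : \sum_(k < m) l0 k <= \sum_(k < m) (B k + s k) by apply: leq_sum => k _; apply: l0_le.
have := sum_B_s; have := m_le_n; move: m_gt0.
by move: (\sum_(k < m) l0 k) (\sum_(k < m) (B k + s k)) m; clear; lia.
Qed.

Let h : nat := \big[gcdn/0]_(g < n.+1 | nat_span m d' g) g.

Lemma span_gcd_dvd k : k < m -> h %| d' k.
Proof.
move=> km; rewrite /d'; case: ifP => lk; last exact: dvdn0.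
have [_ dks _ _] := flex km lk.
have := big_gcdn_dvd (Q := nat_span m d') (leq_trans dks (s_le_n km)).
have dk : d' k = d k by rewrite /d' lk.
by apply; rewrite -dk; apply: nat_span_gen.
Qed.

(* Shrink every long segment, then spend the difference [T2 - T0], a large
   multiple of [h], on whole periods (Frobenius). *)
Lemma redistribute T2 :
  11 * n * n + 2 * n <= \sum_(k < m) l k + m.-1 -> 11 * n * n + 2 * n <= T2 ->
  T2 = \sum_(k < m) l k + m.-1 %[mod c] ->
  exists f, (forall k, k < m -> P k (f k)) /\ \sum_(k < m) f k + m.-1 = T2.
Proof.
move=> NT1 NT2 mT; have [k0 k0m lk0] := long_exists NT1.
have [dk0 dk0s dk0c _] := flex k0m lk0.
have dk0' : d' k0 = d k0 by rewrite /d' lk0.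
have hc : h %| c by apply: dvdn_trans dk0c; rewrite -dk0'; apply: span_gcd_dvd.
set T0 := \sum_(k < m) l0 k + m.-1.
have T0le : T0 <= 10 * n * n + 2 * n - 1 := sum_l0_le.
have T1E : \sum_(k < m) l k + m.-1 = T0 + \sum_(k < m) shrink k * d' k.
  by rewrite /T0 addnAC -big_split /=; congr (_ + _); apply: eq_bigr => k _; apply: l_split.
have hT : h %| T2 - T0.
  rewrite -eqn_mod_dvd; last by move: T0le NT2; clear; lia.
  rewrite -(modn_dvdm T2 hc) mT modn_dvdm // T1E -modnDmr.
  by rewrite (eqP (dvdn_sum _ _)) ?addn0 // => k _; apply/dvdn_mull/span_gcd_dvd.
have /nat_spanP[g gE] : nat_span m d' (T2 - T0).
  apply: (frobenius (a := d k0) (M := n)) => //; first exact: nat_span0.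
  - exact: nat_spanD.
  - by rewrite -dk0'; apply: nat_span_gen.
  - apply: leq_trans (leq_mul (leq_trans dk0s (s_le_n k0m)) (leqnn n)) _.
    by move: T0le NT2; clear; lia.
exists (fun k => l0 k + g k * d' k); split => [k km|]; first exact: P_l0_shift.
by rewrite big_split /= -gE addnAC -/T0 subnKC //; move: T0le NT2; clear; lia.
Qed.

End Redistribution.

Lemma sumn_map_nth (T : Type) (x0 : T) (F : T -> nat) s :
  sumn [seq F x | x <- s] = \sum_(k < size s) F (nth x0 s k).
Proof. by rewrite sumnE big_map (big_nth x0) big_mkord. Qed.

Section Periodicity.
Variables (n : nat) (A : 'M[bool]_n).

(* Decompose the walk along the components it visits and redistribute its
   length among them. *)
Lemma bpow_eq_mod_cyclicity i j T1 T2 :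
  11 * n * n + 2 * n <= T1 -> 11 * n * n + 2 * n <= T2 ->
  T2 = T1 %[mod cyclicity A] -> bpow A T1 i j -> bpow A T2 i j.
Proof.
move=> NT1 NT2 mT /bpowP[p [sp pp lp]]; subst T1 j.
have [ps [ls [ch szl H sm]]] := walk_comp_chain pp.
pose xk k := (nth (i, i) ps k).1.
have s_gt0 k : k < size ps -> 0 < #|scc A (xk k)| by move=> _; apply: scc_card_gt0.
have sum_s : \sum_(k < size ps) #|scc A (xk k)| <= n.
  rewrite /xk -(sumn_map_nth (i, i) (fun pr => #|scc A pr.1|)).
  by apply: leq_trans (comp_chain_card_sum ch) _; rewrite -[X in _ <= X](card_ord n) max_card.
have flex k : k < size ps -> 10 * #|scc A (xk k)| * #|scc A (xk k)| <= nth 0 ls k -> _ :=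
  fun km => long_walk_flex (comp_chain_nth_sconn (i, i) ch km) (H k km).
have T1E : \sum_(k < size ps) nth 0 ls k + (size ps).-1 = size p.
  by rewrite -sm -szl sumnE (big_nth 0) big_mkord.
have [|||f [Pf <-]] := redistribute (comp_chain_size_gt0 ch) H s_gt0 sum_s flex (T2 := T2);
  rewrite ?T1E //.
exact: comp_chain_walk ch Pf.
Qed.

End Periodicity.

Section PowerMonoid.
Variables (Sigma : finType) (n : nat) (T : Sigma -> 'M[bool]_n) (a : Sigma).
Local Notation A := (T a).
Local Notation N := (11 * n * n + 2 * n + cyclicity A).

Lemma bpow_small_exponent k : exists2 k', k' < N & bpow A k = bpow A k'.
Proof.
have c_gt0 := cyclicity_gt0 A.
elim: k {-2}k (leqnn k) => [|K IH] k kK.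
  by exists k => //; move: kK; rewrite leqn0 => /eqP->; rewrite addn_gt0 c_gt0 orbT.
have [kN|kN] := ltnP k N; first by exists k.
have kc : cyclicity A <= k by apply: leq_trans kN; rewrite leq_addl.
have [|k' k'N ek] := IH (k - cyclicity A); first by move: kK kN c_gt0 kc; clear; lia.
have mod_eq : k = k - cyclicity A %[mod cyclicity A] by rewrite -{1}(subnK kc) modnDr.
exists k' => //; rewrite -ek; apply/matrixP => u v.
by apply/idP/idP; apply: bpow_eq_mod_cyclicity => //; move: kN; clear; lia.
Qed.

Lemma card_gen_monoid1 : #|gen_monoid T [set a]| <= N.
Proof.
pose X := [set bpow A k | k : 'I_N].
have memX k : bpow A k \in X.
  by have [k' k'N ->] := bpow_small_exponent k; apply/imsetP; exists (Ordinal k'N).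
have sub : gen_monoid T [set a] \subset X.
  rewrite /gen_monoid; apply: bigcap_inf; apply/and3P; split.
  - exact: (memX 0).
  - by apply/forall_inP => w; rewrite inE => /eqP->; rewrite -(bpow1 A); apply: memX.
  - apply/forall_inP => B /imsetP[i _ ->]; apply/forall_inP => C /imsetP[j _ ->].
    by rewrite -bpowD; apply: memX.
apply: leq_trans (subset_leq_card sub) _.
by apply: leq_trans (leq_imset_card _ _) _; rewrite card_ord.
Qed.

End PowerMonoid.

Section RowSpaces.
Import GRing.Theory.
Local Open Scope ring_scope.

Lemma F2_nat_bool (x : 'F_2) : x = (x != 0 : nat)%:R.
Proof. by case: x => [[|[|]] //] ?; apply: val_inj. Qed.

Lemma F2_nat_bool_eq0 (b : bool) : (((b : nat)%:R : 'F_2) != 0) = b.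
Proof. by case: b. Qed.

Lemma col_neq0 (F : fieldType) m (X : 'cV[F]_m) : (X != 0) = [exists j, X j 0 != 0].
Proof.
apply/idP/existsP => [nz|[j nj]].
  apply/existsP; apply: contraR nz => /existsPn H; apply/eqP/matrixP => i k.
  by rewrite (ord1 k) mxE; apply/eqP; move: (H i); rewrite negbK.
by apply: contraNneq nj => ->; rewrite mxE.
Qed.

Lemma genmx_mulmx_eq0 (F : fieldType) m1 m2 p (X : 'M[F]_(m1, m2)) (Y : 'M[F]_(m2, p)) :
  (<<X>>%MS *m Y == 0) = (X *m Y == 0).
Proof.
have [D1 e1] : exists D, X = D *m <<X>>%MS by apply/submxP; rewrite genmxE.
have [D2 e2] : exists D, <<X>>%MS = D *m X by apply/submxP; rewrite genmxE.
by apply/eqP/eqP => h; [rewrite e1 | rewrite e2]; rewrite -mulmxA h mulmx0.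
Qed.

Definition sel_mx (F : fieldType) q r (f : 'I_q -> 'I_r) : 'M[F]_(r, q) :=
  \matrix_(p, x) (f x == p)%:R.

Lemma sel_mx_trmx_mul (F : fieldType) q r (f : 'I_q -> 'I_r) :
  injective f -> (sel_mx F f)^T *m sel_mx F f = 1%:M.
Proof.
move=> finj; apply/matrixP => x x'; rewrite /sel_mx !mxE (bigD1 (f x)) //= !mxE eqxx mul1r.
rewrite big1 ?addr0 => [|p /negbTE np]; first by rewrite (inj_eq finj) eq_sym.
by rewrite !mxE eq_sym np mul0r.
Qed.

(* The pivot columns [f] are the columns of a maximal free family of columns. *)
Lemma pivot_basis (F : fieldType) k r (W : 'M[F]_(k, r)) :
  exists q (f : 'I_q -> 'I_r) (Z : 'M[F]_(q, r)),
    [/\ injective f, Z *m sel_mx F f = 1%:M & (Z == W)%MS].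
Proof.
move: (row_base W) (eq_row_base W) => Y YW; set f := maxrankfun Y^T.
have YS : Y *m sel_mx F f = (rowsub f Y^T)^T.
  apply/matrixP => i x; rewrite /sel_mx !mxE (bigD1 (f x)) //= mxE eqxx mulr1 big1 ?addr0 //.
  by move=> j /negbTE nj; rewrite mxE eq_sym nj mulr0.
have /row_fullP[D hD] : row_full (rowsub f Y^T)^T.
  by rewrite /row_full mxrank_tr; have := maxrowsub_free Y^T; rewrite /row_free.
have ZS : D *m Y *m sel_mx F f = 1%:M by rewrite -mulmxA YS.
exists _, f, (D *m Y); split; first exact: maxrankfun_inj.
  exact: ZS.
apply/eqmxP; apply: eqmx_trans YW; apply/eqmxP/andP; split; first exact: submxMl.
rewrite -(geq_leqif (mxrank_leqif_sup (submxMl D Y))).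
by apply: leq_trans (mxrankM_maxl _ (sel_mx F f)); rewrite ZS mxrank1 mxrank_tr.
Qed.

Section Echelon.
Variable r : nat.

(* Reduced row echelon form with pivot columns [P]: the row [p \in P] has
   [1] at [p], [0] at the other pivots and [G (p, j)] at [j \notin P]. *)
Definition echelon_mx (P : {set 'I_r}) (G : {ffun 'I_r * 'I_r -> bool}) : 'M['F_2]_r :=
  \matrix_(p, j) (((p \in P) && (if j \in P then p == j else G (p, j)) : bool) : nat)%:R.

Lemma echelon_pivot_basis q (f : 'I_q -> 'I_r) (Z : 'M['F_2]_(q, r)) :
  injective f -> Z *m sel_mx _ f = 1%:M ->
  exists P G, G \in pffun_on false (setX P (~: P)) predT /\ (echelon_mx P G == Z)%MS.
Proof.
move=> finj ZS; pose P := [set f x | x : 'I_q].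
pose G := [ffun pj : 'I_r * 'I_r =>
  [exists x, (f x == pj.1) && (pj.2 \notin P) && (Z x pj.2 != 0)]].
have Zpiv x y : Z x (f y) = (x == y)%:R.
  have := congr1 (fun M : 'M['F_2]_q => M x y) ZS; rewrite /sel_mx !mxE => <-.
  rewrite (bigD1 (f y)) //= mxE eqxx mulr1 big1 ?addr0 // => j /negbTE nj.
  by rewrite mxE eq_sym nj mulr0.
have ES : echelon_mx P G = sel_mx _ f *m Z.
  apply/matrixP => p j; rewrite /sel_mx !mxE.
  have [/imsetP[x0 _ ->]|pP] /= := boolP (p \in P); last first.
    rewrite big1 // => x _; rewrite mxE; case: eqP => [ex|_]; last by rewrite mul0r.
    by case/negP: pP; rewrite -ex imset_f.
  rewrite (bigD1 x0) //= mxE eqxx mul1r big1 ?addr0 => [|x /negbTE nx]; last first.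
    by rewrite mxE (inj_eq finj) nx mul0r.
  have [/imsetP[x1 _ ->]|jP] := boolP (j \in P); first by rewrite (inj_eq finj) Zpiv.
  rewrite ffunE /=.
  have -> : [exists x, (f x == f x0) && (j \notin P) && (Z x j != 0)] = (Z x0 j != 0).
    apply/existsP/idP => [[x /andP[/andP[/eqP/finj-> _] //]]|h].
    by exists x0; rewrite eqxx h jP.
  by rewrite -F2_nat_bool.
exists P, G; split.
  apply/pffun_onP; split=> [|//]; apply/subsetP => -[p j].
  rewrite inE ffunE /= eqbF_neg negbK => /existsP[x /andP[/andP[/eqP <- jP] _]].
  by rewrite inE /= inE imset_f // inE.
rewrite ES; apply/andP; split; first exact: submxMl.
by rewrite -[X in (X <= _)%MS]mul1mx -(sel_mx_trmx_mul _ finj) -mulmxA submxMl.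
Qed.

Lemma row_space_echelon k (W : 'M['F_2]_(k, r)) : exists P G,
  G \in pffun_on false (setX P (~: P)) predT /\ (echelon_mx P G == W)%MS.
Proof.
have [q [f [Z [finj ZS ZW]]]] := pivot_basis W.
have [P [G [PG EZ]]] := echelon_pivot_basis finj ZS.
by exists P, G; split => //; apply/eqmxP; apply: eqmx_trans (eqmxP EZ) (eqmxP ZW).
Qed.

End Echelon.
End RowSpaces.

Lemma muln_le_quarter_sq x y : x * y <= (x + y) * (x + y) %/ 4.
Proof.
rewrite leq_divRL //; wlog xy : x y / x <= y => [hw|].
  by have [/hw//|/ltnW/hw] := leqP x y; rewrite [y * x]mulnC [y + x]addnC.
have [d ->] : exists d, y = x + d by exists (y - x); lia.
nia.
Qed.

Definition subspace_bound (r : nat) : nat := 2 ^ r * 2 ^ (r * r %/ 4).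

Lemma card_row_spaces r m : #|[set <<W>>%MS | W : 'M['F_2]_(m, r)]| <= subspace_bound r.
Proof.
pose ok (P : {set 'I_r}) (G : {ffun 'I_r * 'I_r -> bool}) :=
  G \in pffun_on false (setX P (~: P)) predT.
pose PG := [set pg | ok pg.1 pg.2].
have sub : [set <<W>>%MS | W : 'M['F_2]_(m, r)] \subset
           [set <<echelon_mx pg.1 pg.2>>%MS | pg in PG].
  apply/subsetP => X /imsetP[W _ ->]; have [P [G [hG hW]]] := row_space_echelon W.
  by apply/imsetP; exists (P, G); [rewrite inE | apply/esym/genmxP].
apply: leq_trans (subset_leq_card sub) (leq_trans (leq_imset_card _ _) _).
have -> : #|PG| = \sum_(P : {set 'I_r}) #|pffun_on false (setX P (~: P)) predT|.
  rewrite -sum1_card (eq_bigl (fun pg => true && ok pg.1 pg.2)) => [|pg]; last first.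
    by rewrite inE.
  rewrite -(pair_big_dep xpredT ok (fun _ _ => 1)) /=.
  by apply: eq_bigr => P _; rewrite sum1_card.
apply: (@leq_trans (\sum_(P : {set 'I_r}) 2 ^ (r * r %/ 4))).
  apply: leq_sum => P _; rewrite card_pffun_on card_bool leq_exp2l // cardsX.
  by have := muln_le_quarter_sq #|P| #|~: P|; rewrite cardsC card_ord.
by rewrite sum_nat_const -cardsT -powersetT card_powerset cardsT card_ord.
Qed.

Section BooleanRange.
Import GRing.Theory.
Local Open Scope ring_scope.
Variables (n : nat) (T : 'M[bool]_n).

Let T2 : 'M['F_2]_n := map_mx (fun b : bool => (b : nat)%:R : 'F_2) T.

(* Over [F_2], [T2 = col_base T2 *m row_base T2]; the [i]-th entry of [T v]
   is [1] iff some column [j] of [T2] with [v j] has a nonzero entry in row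
   [i], so [T v] only depends on the span of the selected columns of
   [row_base T2]. *)
Definition span_support (W : 'M['F_2]_(\rank T2)) : 'cV[bool]_n :=
  \col_i (W *m (row i (col_base T2))^T != 0).

Definition selected_cols (v : 'cV[bool]_n) : 'M['F_2]_(n, \rank T2) :=
  \matrix_(j, l) (if v j 0 then row_base T2 l j else 0).

Lemma selected_cols_mul_row v i j :
  (selected_cols v *m (row i (col_base T2))^T) j 0 = if v j 0 then T2 i j else 0.
Proof.
rewrite mxE; case: ifP => vj.
  rewrite -[in RHS](mulmx_base T2) mxE; apply: eq_bigr => l _.
  by rewrite !mxE vj mulrC.
by rewrite big1 // => l _; rewrite !mxE vj mul0r.
Qed.

Lemma bmulv_span_support v : bmulv T v = span_support (<<selected_cols v>>%MS).
Proof.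
apply/matrixP => i z; rewrite (ord1 z) !mxE genmx_mulmx_eq0 col_neq0.
apply/existsP/existsP => [[k /andP[Tik vk]]|[j]].
  by exists k; rewrite selected_cols_mul_row vk /T2 mxE Tik.
rewrite selected_cols_mul_row; case: ifP => vj; last by rewrite eqxx.
by rewrite /T2 mxE F2_nat_bool_eq0 => Tij; exists j; rewrite Tij vj.
Qed.

Lemma card_brange : (#|brange T| <= subspace_bound (rank2 T))%N.
Proof.
apply: leq_trans (card_row_spaces (rank2 T) n).
have sub : brange T \subset
    [set span_support W | W in [set <<W>>%MS | W : 'M['F_2]_(n, \rank T2)]].
  apply/subsetP => u /imsetP[v _ ->]; rewrite bmulv_span_support.
  apply/imsetP; exists (<<selected_cols v>>%MS) => //.
  by apply/imsetP; exists (selected_cols v).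
exact: leq_trans (subset_leq_card sub) (leq_imset_card _ _).
Qed.

End BooleanRange.

Lemma bigminn_le (I : eqType) (r : seq I) x0 (F : I -> nat) j :
  j \in r -> \big[minn/x0]_(i <- r) F i <= F j.
Proof.
elim: r => [//|x r IH]; rewrite inE big_cons => /orP[/eqP->|jr].
  exact: geq_minl.
exact: leq_trans (geq_minr _ _) (IH jr).
Qed.

Lemma subset_complexity_le (Sigma : finType) n (T : Sigma -> 'M[bool]_n) a :
  subset_complexity T <=
  (1 + #|Sigma| * \max_(w | w != a) subspace_bound (rank2 (T w))) *
  (11 * n * n + 2 * n + cyclicity (T a)).
Proof.
apply: (@leq_trans (sc_term T [set a])).
  exact: bigminn_le (mem_index_enum _).
apply: leq_mul; last exact: card_gen_monoid1.
set mb := \max_(w | w != a) _.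
rewrite leq_add2l (@leq_trans (\sum_(w in ~: [set a]) mb)) //.
  apply: leq_sum => w; rewrite in_setC in_set1 => wa.
  apply: leq_trans (card_brange _) _.
  exact: (leq_bigmax_cond (F := fun w => subspace_bound (rank2 (T w)))).
by rewrite sum_nat_const leq_mul2r max_card orbT.
Qed.

Lemma period_start_le n c : 0 < c -> 11 * n * n + 2 * n + c <= 15 * (c + n * n).
Proof.
move=> c_gt0; have : n <= n * n by case: n => // k; rewrite leq_pmulr.
nia.
Qed.

Section RealBounds.
Local Open Scope R_scope.

Lemma INR_expn2 k : INR (2 ^ k)%N = Rpower 2 (INR k).
Proof.
rewrite Rpower_pow; last lra.
by elim: k => [//|k IH]; rewrite expnS mult_INR IH.
Qed.

Lemma bigRmax_ge1 (I : eqType) (r : seq I) (P : pred I) (F : I -> R) :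
  1 <= \big[Rmax/1]_(i <- r | P i) F i.
Proof.
elim: r => [|x r IH]; rewrite ?big_nil ?big_cons; first exact: Rle_refl.
by case: (P x) => //; apply: Rle_trans IH (Rmax_r _ _).
Qed.

Lemma bigRmax_ge (I : eqType) (r : seq I) (P : pred I) (F : I -> R) j :
  j \in r -> P j -> F j <= \big[Rmax/1]_(i <- r | P i) F i.
Proof.
elim: r => [//|x r IH]; rewrite inE big_cons => /orP[/eqP->|jr] Pj.
  by rewrite Pj; apply: Rmax_l.
by case: (P x); [apply: Rle_trans (IH jr Pj) (Rmax_r _ _) | apply: IH].
Qed.

Definition eps_const (eps : R) : R := Rpower 2 (/ (4 * (/ (4 - eps) - / 4))).

(* With [dl := 1/(4 - eps) - 1/4 > 0], completing the square gives
   [r <= 1/(4 dl) + dl r^2]. *)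
Lemma subspace_bound_le eps r : 0 < eps -> eps < 4 ->
  INR (subspace_bound r) <= eps_const eps * Rpower 2 (INR r ^ 2 / (4 - eps)).
Proof.
move=> e0 e4; rewrite /subspace_bound /eps_const mult_INR !INR_expn2 -!Rpower_plus.
set dl := / (4 - eps) - / 4.
have dl_gt0 : 0 < dl.
  have : / 4 < / (4 - eps) by apply: Rinv_lt_contravar; lra.
  rewrite /dl; lra.
apply: Rle_Rpower; first lra.
have hk : INR (r * r %/ 4) <= INR r ^ 2 / 4.
  have /leP/le_INR : (r * r %/ 4 * 4 <= r * r)%N by rewrite leq_divM.
  by rewrite !mult_INR /= => h; lra.
have -> : INR r ^ 2 / (4 - eps) = INR r ^ 2 / 4 + dl * INR r ^ 2 by rewrite /dl; field; lra.
suff h : INR r <= / (4 * dl) + dl * INR r ^ 2 by lra.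
have := pow2_ge_0 (2 * dl * INR r - 1); have : / (4 * dl) * (4 * dl) = 1 by field; lra.
nra.
Qed.

Lemma INR_bigmax_le (I : finType) (P : pred I) (F : I -> nat) (G : I -> R) (C : R) :
  0 <= C -> (forall i, P i -> INR (F i) <= C * G i) ->
  INR (\max_(i | P i) F i) <= C * \big[Rmax/1]_(i | P i) G i.
Proof.
move=> C_ge0 FG; have M_ge1 : 1 <= \big[Rmax/1]_(i | P i) G i by apply: bigRmax_ge1.
apply: (big_ind (fun k => INR k <= C * \big[Rmax/1]_(i | P i) G i)) => [|x y hx hy|i Pi].
- by apply: Rmult_le_pos; lra.
- by case: leqP.
- apply: Rle_trans (FG i Pi) (Rmult_le_compat_l _ _ _ C_ge0 _).
  exact: bigRmax_ge (mem_index_enum i) Pi.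
Qed.

Lemma product_estimate (x N K S m C M : R) :
  0 <= C -> 1 <= S -> 1 <= M -> 0 <= m -> 0 <= N ->
  x <= (1 + S * m) * N -> N <= 15 * K -> m <= C * M ->
  x <= 15 * (C + 1) * S * K * M.
Proof.
move=> C_ge0 S_ge1 M_ge1 m_ge0 N_ge0 hx hN hm.
have h1 : 1 + S * m <= S * (C + 1) * M by nra.
apply: Rle_trans hx _; apply: Rle_trans (Rmult_le_compat _ _ _ _ _ N_ge0 h1 hN) _.
- by nra.
- by right; ring.
Qed.

End RealBounds.

Local Open Scope R_scope.

Theorem proposition3 :
  forall eps : R, 0 < eps -> eps < 4 ->
  exists C : R,
  forall (Sigma : finType) (n : nat) (I F : {set 'I_n})
         (delta : {set 'I_n * Sigma * 'I_n}) (a : Sigma),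
    INR (subset_complexity (trans_mx delta)) <=
    C * INR #|Sigma| * (INR (cyclicity (trans_mx delta a)) + INR n ^ 2) *
    \big[Rmax/1]_(b : Sigma | b != a)
       Rpower 2 (INR (rank2 (trans_mx delta b)) ^ 2 / (4 - eps)).
Proof.
move=> eps e0 e4; have C_ge0 : 0 <= eps_const eps by apply/Rlt_le/exp_pos.
exists (15 * (eps_const eps + 1)) => Sigma n _ _ delta a; set T := trans_mx delta.
apply: (product_estimate (m := INR (\max_(w | w != a) subspace_bound (rank2 (T w))))
          (N := INR (11 * n * n + 2 * n + cyclicity (T a)))) => //.
- have /leP/le_INR : (1 <= #|Sigma|)%N by apply/card_gt0P; exists a.
  by [].
- exact: bigRmax_ge1.
- exact: pos_INR.
- exact: pos_INR.
- apply: Rle_trans (le_INR _ _ (leP (subset_complexity_le T a))) (Req_le _ _ _).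
  by rewrite !(mult_INR, plus_INR).
- have /leP/le_INR := period_start_le n (cyclicity_gt0 (T a)).
  move/Rle_trans; apply; apply: Req_le.
  by rewrite !(mult_INR, plus_INR) (INR_IZR_INZ 15) (_ : IZR (Z.of_nat 15) = 15) //; ring.
- by apply: INR_bigmax_le => // w _; apply: subspace_bound_le.
Qed.
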